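(* Let $m$ be a non-empty finite word over $D=\{E,N,S,W\}$. If the word $mm$ is a free path, then the bi-infinite word ${}^{\omega}m^{\omega}=\cdots mmm\cdots$ is a free path.
   Context: $D=\{E,N,S,W\}$ with $E=(1,0)$, $N=(0,1)$, $S=(0,-1)$, $W=(-1,0)$; $\mathbb Z^2$ is viewed as the grid graph in which two points are adjacent iff they are at Euclidean distance $1$. A free path is a (finite, forward infinite, backward infinite or bi-infinite) word over $D$ such that the walk in $\mathbb Z^2$ obtained by starting at some point and successively adding the letters of the word as unit vectors never visits a vertex twice (i.e. it is a simple path; this does not depend on the starting point). *)

From Stdlib Require Import ZArith List.
Import ListNotations.
Open Scope Z_scope.

Inductive dir : Type := E | N | S | W.

Definition vec (d : dir) : Z * Z :=
  match d with
  | E => (1, 0) | N => (0, 1) | S => (0, -1) | W => (-1, 0)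
  end.

Definition padd (p q : Z * Z) : Z * Z := (fst p + fst q, snd p + snd q).

Definition free_finite (w : list dir) : Prop :=
  exists p : nat -> Z * Z,
    (forall i : nat, (i < length w)%nat -> p (Datatypes.S i) = padd (p i) (vec (nth i w E))) /\
    (forall i j : nat, (i <= length w)%nat -> (j <= length w)%nat -> p i = p j -> i = j).

Definition free_biinf (w : Z -> dir) : Prop :=
  exists p : Z -> Z * Z,
    (forall i : Z, p (i + 1) = padd (p i) (vec (w i))) /\
    (forall i j : Z, p i = p j -> i = j).

Definition biperiodic (m : list dir) : Z -> dir :=
  fun i => nth (Z.to_nat (i mod Z.of_nat (length m))) m E.

(* Let p be the walk of mm, n = |m| and v = p n - p 0, so that p (k + n) = p k + v and the
   unrolled walk X (q n + e) = p e + q v spells the bi-infinite word. X can only fail to be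
   injective if p b = p a + c v for some a < b < n; freeness of mm excludes |c| <= 1. For
   |c| >= 2 and b - a minimal, the periodic walk repeating p a, ..., p b (period c v) is
   disjoint from its translate by v. This is impossible: the translate runs from the highest to
   the lowest level of the walk across the direction v, while a bi-infinite periodic walk
   separates the plane, as a discrete crossing number shows. *)

From Stdlib Require Import ZArith List Lia.
Import ListNotations.
Open Scope Z_scope.

Definition psub (P Q : Z * Z) : Z * Z := (fst P - fst Q, snd P - snd Q).
Definition scale (c : Z) (v : Z * Z) : Z * Z := (c * fst v, c * snd v).
Definition height (u P : Z * Z) : Z := fst u * snd P - snd u * fst P.
Definition adjacent (P Q : Z * Z) : Prop :=
  Z.abs (fst P - fst Q) + Z.abs (snd P - snd Q) = 1.
Definition walk (X : Z -> Z * Z) : Prop := forall t, adjacent (X t) (X (t + 1)).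
Definition periodic_walk (X : Z -> Z * Z) (r : Z) (u : Z * Z) : Prop :=
  0 < r /\ walk X /\ forall t, X (t + r) = padd (X t) u.

Lemma pair_eqE (P Q : Z * Z) : P = Q <-> fst P = fst Q /\ snd P = snd Q.
Proof. destruct P, Q; simpl; split; [intros [= -> ->] | intros [-> ->]]; auto. Qed.

Lemma pair_neqE (P Q : Z * Z) : P <> Q -> fst P <> fst Q \/ snd P <> snd Q.
Proof. rewrite pair_eqE; lia. Qed.

Lemma adjacent_sym P Q : adjacent P Q -> adjacent Q P.
Proof. unfold adjacent; lia. Qed.

Lemma adjacent_padd_vec P d : adjacent P (padd P (vec d)).
Proof. unfold adjacent, padd; destruct d; simpl; lia. Qed.

Lemma adjacent_translate P Q v : adjacent P Q -> adjacent (padd P v) (padd Q v).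
Proof. unfold adjacent, padd; simpl; lia. Qed.

Lemma adjacent_cases P Q : adjacent P Q ->
  Q = (fst P, snd P + 1) \/ Q = (fst P + 1, snd P) \/
  P = (fst Q, snd Q + 1) \/ P = (fst Q + 1, snd Q).
Proof. rewrite !pair_eqE; unfold adjacent; simpl; lia. Qed.

Lemma height_padd u P Q : height u (padd P Q) = height u P + height u Q.
Proof. unfold height, padd; simpl; ring. Qed.

Lemma height_scale u c P : height u (scale c P) = c * height u P.
Proof. unfold height, scale; simpl; ring. Qed.

Lemma padd_scale_0 P v : padd P (scale 0 v) = P.
Proof. apply pair_eqE; unfold padd, scale; cbn [fst snd]; lia. Qed.

Lemma padd_scale_flip P Q c v : P = padd Q (scale c v) -> Q = padd P (scale (- c) v).
Proof. intros ->; apply pair_eqE; unfold padd, scale; cbn [fst snd]; lia. Qed.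

Lemma padd_scale_cancel P c v : P = padd P (scale c v) -> v <> (0, 0) -> c = 0.
Proof.
  rewrite pair_eqE; unfold padd, scale; cbn [fst snd]; intros [E1 E2] Hv.
  apply pair_neqE in Hv; cbn [fst snd] in Hv; nia.
Qed.

Lemma nat_function_bounded (f : nat -> Z) K :
  exists M, forall i, (i <= K)%nat -> Z.abs (f i) <= M.
Proof.
  induction K as [|K [M HM]].
  - exists (Z.abs (f O)); intros i Hi; replace i with O by lia; lia.
  - exists (Z.max M (Z.abs (f (Datatypes.S K)))); intros i Hi.
    destruct (Nat.eq_dec i (Datatypes.S K)) as [->|]; [lia|].
    specialize (HM i ltac:(lia)); lia.
Qed.

Lemma nat_function_argmax (f : nat -> Z) K :
  exists k, (k <= K)%nat /\ forall i, (i <= K)%nat -> f i <= f k.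
Proof.
  induction K as [|K [k [Hk H]]].
  - exists O; split; [lia|]; intros i Hi; replace i with O by lia; lia.
  - destruct (Z_le_dec (f k) (f (Datatypes.S K))).
    + exists (Datatypes.S K); split; [lia|]; intros i Hi.
      destruct (Nat.eq_dec i (Datatypes.S K)) as [->|]; [lia|]; specialize (H i ltac:(lia)); lia.
    + exists k; split; [lia|]; intros i Hi.
      destruct (Nat.eq_dec i (Datatypes.S K)) as [->|]; [lia|]; apply H; lia.
Qed.

Lemma mod_periodic_max (g : Z -> Z) r : 0 < r -> (forall t, g t = g (t mod r)) ->
  exists t0, forall t, g t <= g t0.
Proof.
  intros Hr Hg.
  destruct (nat_function_argmax (fun i => g (Z.of_nat i)) (Z.to_nat (r - 1))) as [k [_ Hk]].
  exists (Z.of_nat k); intros t; rewrite Hg.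
  pose proof (Z.mod_pos_bound t r Hr).
  specialize (Hk (Z.to_nat (t mod r)) ltac:(lia)); rewrite Z2Nat.id in Hk by lia; exact Hk.
Qed.

Lemma Z_divmod_succ t r : 0 < r ->
  (t mod r + 1 < r /\ (t + 1) mod r = t mod r + 1 /\ (t + 1) / r = t / r) \/
  (t mod r + 1 = r /\ (t + 1) mod r = 0 /\ (t + 1) / r = t / r + 1).
Proof.
  intros Hr; pose proof (Z.div_mod t r ltac:(lia)); pose proof (Z.mod_pos_bound t r Hr).
  destruct (Z_lt_le_dec (t mod r + 1) r); [left | right]; (split; [lia|]); split.
  - symmetry; apply (Z.mod_unique _ _ (t / r)); lia.
  - symmetry; apply (Z.div_unique _ _ _ (t mod r + 1)); lia.
  - symmetry; apply (Z.mod_unique _ _ (t / r + 1)); lia.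
  - symmetry; apply (Z.div_unique _ _ _ 0); lia.
Qed.
(* [edge_crossing (x, y) A B] is the signed number of times the edge [A B] crosses the
   vertical half-line {x + 1/2} × (y, +oo): +1 from left to right, -1 from right to left. *)
Definition edge_crossing (P A B : Z * Z) : Z :=
  if Z.eq_dec (snd A) (snd B) then
    if Z_lt_dec (snd P) (snd A) then
      if Z.eq_dec (fst A) (fst P) then (if Z.eq_dec (fst B) (fst P + 1) then 1 else 0)
      else if Z.eq_dec (fst A) (fst P + 1) then (if Z.eq_dec (fst B) (fst P) then -1 else 0)
      else 0
    else 0
  else 0.

Definition above_right (P A : Z * Z) : Z :=
  if Z.eq_dec (fst A) (fst P + 1) then (if Z_lt_dec (snd P) (snd A) then 1 else 0) else 0.

Definition right_of (P A : Z * Z) : Z := if Z_lt_dec (fst P) (fst A) then 1 else 0.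

Ltac decide_all := repeat match goal with
  | |- context [Z.eq_dec ?a ?b] => destruct (Z.eq_dec a b)
  | |- context [Z_lt_dec ?a ?b] => destruct (Z_lt_dec a b)
  end.

Lemma edge_crossing_up x y A B :
  adjacent A B -> A <> (x, y + 1) -> B <> (x, y + 1) ->
  edge_crossing (x, y + 1) A B = edge_crossing (x, y) A B.
Proof.
  unfold adjacent, edge_crossing; intros HAB HA HB.
  apply pair_neqE in HA, HB; simpl in *; decide_all; lia.
Qed.

Lemma edge_crossing_right x y A B :
  adjacent A B -> A <> (x + 1, y) -> B <> (x + 1, y) ->
  edge_crossing (x + 1, y) A B - edge_crossing (x, y) A B =
  above_right (x, y) A - above_right (x, y) B.
Proof.
  unfold adjacent, edge_crossing, above_right; intros HAB HA HB.
  apply pair_neqE in HA, HB; simpl in *; decide_all; lia.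
Qed.

Lemma edge_crossing_high P A B : adjacent A B -> snd P < snd A -> snd P < snd B ->
  edge_crossing P A B = right_of P B - right_of P A.
Proof. unfold adjacent, edge_crossing, right_of; intros; decide_all; lia. Qed.

Lemma edge_crossing_low P A B : snd A <= snd P -> edge_crossing P A B = 0.
Proof. unfold edge_crossing; intros; decide_all; lia. Qed.

Fixpoint crossings (X : Z -> Z * Z) (t0 : Z) (K : nat) (P : Z * Z) : Z :=
  match K with
  | O => 0
  | Datatypes.S k =>
      crossings X t0 k P + edge_crossing P (X (t0 + Z.of_nat k)) (X (t0 + Z.of_nat k + 1))
  end.

Section Crossings.

Variables (X : Z -> Z * Z) (t0 : Z).
Hypothesis HX : walk X.

Lemma crossings_up K x y : (forall t, X t <> (x, y + 1)) ->
  crossings X t0 K (x, y + 1) = crossings X t0 K (x, y).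
Proof.
  intros Hoff; induction K as [|k IH]; simpl; [reflexivity|].
  rewrite IH, edge_crossing_up; auto.
Qed.

Lemma crossings_right K x y : (forall t, X t <> (x + 1, y)) ->
  crossings X t0 K (x + 1, y) - crossings X t0 K (x, y) =
  above_right (x, y) (X t0) - above_right (x, y) (X (t0 + Z.of_nat K)).
Proof.
  intros Hoff; induction K as [|k IH]; cbn [crossings].
  - rewrite Z.add_0_r; lia.
  - pose proof (edge_crossing_right x y _ _ (HX (t0 + Z.of_nat k)) (Hoff _) (Hoff _)).
    replace (t0 + Z.of_nat (Datatypes.S k)) with (t0 + Z.of_nat k + 1) by lia; lia.
Qed.

Lemma crossings_high K P :
  (forall i, (i <= K)%nat -> snd P < snd (X (t0 + Z.of_nat i))) ->
  crossings X t0 K P = right_of P (X (t0 + Z.of_nat K)) - right_of P (X t0).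
Proof.
  induction K as [|k IH]; intros Hhigh; cbn [crossings].
  - rewrite Z.add_0_r; lia.
  - rewrite IH by (intros; apply Hhigh; lia).
    pose proof (Hhigh k ltac:(lia)); pose proof (Hhigh (Datatypes.S k) ltac:(lia)).
    replace (t0 + Z.of_nat (Datatypes.S k)) with (t0 + Z.of_nat k + 1) in * by lia.
    rewrite edge_crossing_high; auto; lia.
Qed.

Lemma crossings_low K P :
  (forall i, (i < K)%nat -> snd (X (t0 + Z.of_nat i)) <= snd P) -> crossings X t0 K P = 0.
Proof.
  induction K as [|k IH]; intros Hlow; simpl; [reflexivity|].
  rewrite IH, edge_crossing_low by (auto; apply Hlow; lia); reflexivity.
Qed.

Lemma crossings_adjacent K P Q : adjacent P Q ->
  (forall t, X t <> P) -> (forall t, X t <> Q) ->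
  fst (X t0) < Z.min (fst P) (fst Q) -> Z.max (fst P) (fst Q) < fst (X (t0 + Z.of_nat K)) ->
  crossings X t0 K P = crossings X t0 K Q.
Proof.
  intros HPQ HP HQ Hleft Hright.
  assert (Hup : forall x y, (forall t, X t <> (x, y + 1)) ->
            crossings X t0 K (x, y) = crossings X t0 K (x, y + 1))
    by (intros; symmetry; apply crossings_up; auto).
  assert (Hstep : forall x y, (forall t, X t <> (x + 1, y)) ->
            fst (X t0) < x -> x + 1 < fst (X (t0 + Z.of_nat K)) ->
            crossings X t0 K (x, y) = crossings X t0 K (x + 1, y)).
  { intros x y Hoff H0 H1; pose proof (crossings_right K x y Hoff).
    unfold above_right in *; simpl in *; revert H; decide_all; lia. }
  destruct P as [a b], Q as [c d].
  destruct (adjacent_cases _ _ HPQ) as [E|[E|[E|E]]]; simpl in E; injection E as -> ->;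
    simpl in *.
  - apply Hup; auto.
  - apply Hstep; auto; lia.
  - symmetry; apply Hup; auto.
  - symmetry; apply Hstep; auto; lia.
Qed.

(* For [0 < fst u] the height [height u] grows along columns, so the half-line above a point
   at least as high as the walk misses the walk, and the crossing number vanishes. *)
Lemma crossings_above_walk u K P : 0 < fst u ->
  (forall t, height u (X t) <= height u P) -> crossings X t0 K P = 0.
Proof.
  intros Hu Htop; destruct P as [x y].
  assert (Hlift : forall k : nat, crossings X t0 K (x, y + Z.of_nat k) = crossings X t0 K (x, y)).
  { induction k as [|k IH]; [rewrite Z.add_0_r; reflexivity|].
    rewrite <- IH; replace (y + Z.of_nat (Datatypes.S k)) with (y + Z.of_nat k + 1) by lia.
    apply crossings_up; intros t Ht; specialize (Htop t); rewrite Ht in Htop.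
    unfold height in Htop; simpl in Htop; nia. }
  destruct (nat_function_bounded (fun i => snd (X (t0 + Z.of_nat i))) K) as [B HB].
  rewrite <- (Hlift (Z.to_nat (B - y))).
  apply crossings_low; intros i Hi; specialize (HB i ltac:(lia)); simpl in *; lia.
Qed.

Lemma crossings_below_walk u K P : 0 < fst u ->
  (forall t, X t <> P) -> (forall t, height u P <= height u (X t)) ->
  fst (X t0) <= fst P < fst (X (t0 + Z.of_nat K)) -> crossings X t0 K P = 1.
Proof.
  intros Hu Hoff Hbot Hspan; destruct P as [x y].
  assert (Hlower : forall k : nat,
             crossings X t0 K (x, y - Z.of_nat k) = crossings X t0 K (x, y)).
  { induction k as [|k IH]; [rewrite Z.sub_0_r; reflexivity|].
    rewrite <- IH; replace (y - Z.of_nat k) with (y - Z.of_nat (Datatypes.S k) + 1) by lia.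
    symmetry; apply crossings_up; intros t Ht.
    replace (y - Z.of_nat (Datatypes.S k) + 1) with (y - Z.of_nat k) in Ht by lia.
    destruct k as [|k]; [apply (Hoff t); rewrite Ht; f_equal; lia|].
    specialize (Hbot t); rewrite Ht in Hbot; unfold height in Hbot; simpl in Hbot; nia. }
  destruct (nat_function_bounded (fun i => snd (X (t0 + Z.of_nat i))) K) as [B HB].
  rewrite <- (Hlower (Z.to_nat (y + B + 1))), crossings_high.
  - unfold right_of; simpl in *; decide_all; lia.
  - intros i Hi; specialize (HB i Hi); simpl in *; lia.
Qed.

End Crossings.

Definition crossing_path (X : Z -> Z * Z) (u : Z * Z) (Y : nat -> Z * Z) (K : nat) : Prop :=
  (forall i, (i < K)%nat -> adjacent (Y i) (Y (Datatypes.S i))) /\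
  (forall i t, (i <= K)%nat -> Y i <> X t) /\
  (forall t, height u (X t) <= height u (Y O)) /\
  (forall t, height u (Y K) <= height u (X t)).

Section PeriodicWalk.

Variables (X : Z -> Z * Z) (r : Z) (u : Z * Z).
Hypothesis HX : periodic_walk X r u.

Lemma periodic_walk_shift q t : X (t + q * r) = padd (X t) (scale q u).
Proof.
  destruct HX as (Hr & _ & Hper).
  assert (Hnat : forall (k : nat) t, X (t + Z.of_nat k * r) = padd (X t) (scale (Z.of_nat k) u)).
  { induction k as [|k IH]; intros s.
    - rewrite Z.mul_0_l, Z.add_0_r; apply pair_eqE; unfold padd, scale; cbn [fst snd]; lia.
    - replace (s + Z.of_nat (Datatypes.S k) * r) with (s + Z.of_nat k * r + r) by lia.
      rewrite Hper, IH; apply pair_eqE; unfold padd, scale; cbn [fst snd]; nia. }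
  destruct (Z_le_gt_dec 0 q).
  - rewrite <- (Z2Nat.id q) by lia; apply Hnat.
  - pose proof (Hnat (Z.to_nat (- q)) (t + q * r)) as H.
    rewrite Z2Nat.id in H by lia; replace (t + q * r + - q * r) with t in H by ring.
    rewrite H; apply pair_eqE; unfold padd, scale; cbn [fst snd]; nia.
Qed.

Lemma periodic_walk_mod t : X t = padd (X (t mod r)) (scale (t / r) u).
Proof.
  destruct HX as (Hr & _).
  rewrite <- periodic_walk_shift; f_equal; pose proof (Z.div_mod t r); lia.
Qed.

Lemma periodic_walk_height t : height u (X t) = height u (X (t mod r)).
Proof.
  rewrite periodic_walk_mod at 1; rewrite height_padd, height_scale.
  unfold height; ring.
Qed.

Lemma periodic_walk_height_max : exists t0, forall t, height u (X t) <= height u (X t0).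
Proof. apply (mod_periodic_max _ r); [apply HX | apply periodic_walk_height]. Qed.

Lemma periodic_walk_height_min : exists t0, forall t, height u (X t0) <= height u (X t).
Proof.
  destruct (mod_periodic_max (fun t => - height u (X t)) r) as [t0 H];
    [apply HX | intros; simpl; rewrite periodic_walk_height; reflexivity |].
  exists t0; intros t; specialize (H t); simpl in H; lia.
Qed.

Lemma periodic_walk_exits : 0 < fst u -> forall M,
  exists t0 K, fst (X t0) < - M /\ M < fst (X (t0 + Z.of_nat K)).
Proof.
  intros Hu M; destruct HX as (Hr & _).
  set (q := Z.abs M + Z.abs (fst (X 0)) + 1).
  assert (Hq : Z.abs M + Z.abs (fst (X 0)) < q) by apply Z.lt_succ_diag_r.
  exists (- q * r), (Z.to_nat (2 * q * r)); split.
  - rewrite <- (Z.add_0_l (- q * r)), periodic_walk_shift; unfold padd, scale; cbn [fst snd].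
    nia.
  - replace (- q * r + Z.of_nat (Z.to_nat (2 * q * r))) with (0 + q * r) by nia.
    rewrite periodic_walk_shift; unfold padd, scale; cbn [fst snd]; nia.
Qed.

(* A discrete Jordan curve argument: the crossing number of a long segment of the walk is
   constant along an avoiding path, 0 at its high end and 1 at its low end. *)
Lemma crossing_path_pos Y K : 0 < fst u -> ~ crossing_path X u Y K.
Proof.
  intros Hu (HY & Havoid & Htop & Hbot).
  destruct (nat_function_bounded (fun i => fst (Y i)) K) as [M HM].
  destruct (periodic_walk_exits Hu M) as (t0 & L & Hleft & Hright).
  assert (Hwalk : walk X) by apply HX.
  assert (Hconst : forall i, (i <= K)%nat -> crossings X t0 L (Y i) = crossings X t0 L (Y O)).
  { induction i as [|i IH]; intros Hi; [reflexivity|].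
    rewrite <- IH by lia; symmetry.
    pose proof (HM i ltac:(lia)); pose proof (HM (Datatypes.S i) ltac:(lia)).
    apply crossings_adjacent; auto; try (intros t; apply not_eq_sym, Havoid); lia. }
  pose proof (Hconst K (le_n K)) as HK.
  rewrite (crossings_above_walk X t0 Hwalk u L (Y O) Hu Htop) in HK.
  rewrite (crossings_below_walk X t0 Hwalk u L (Y K) Hu) in HK; [discriminate | | auto |].
  - intros t; apply not_eq_sym, Havoid; lia.
  - pose proof (HM K (le_n K)); lia.
Qed.

End PeriodicWalk.

Definition rot (P : Z * Z) : Z * Z := (- snd P, fst P).

Lemma rot_padd P Q : rot (padd P Q) = padd (rot P) (rot Q).
Proof. unfold rot, padd; cbn [fst snd]; f_equal; lia. Qed.

Lemma rot_inj P Q : rot P = rot Q -> P = Q.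
Proof. rewrite !pair_eqE; unfold rot; cbn [fst snd]; lia. Qed.

Lemma adjacent_rot P Q : adjacent P Q -> adjacent (rot P) (rot Q).
Proof. unfold adjacent, rot; cbn [fst snd]; lia. Qed.

Lemma height_rot u P : height (rot u) (rot P) = height u P.
Proof. unfold height, rot; cbn [fst snd]; ring. Qed.

Lemma periodic_walk_rot X r u :
  periodic_walk X r u -> periodic_walk (fun t => rot (X t)) r (rot u).
Proof.
  intros (Hr & Hwalk & Hper); repeat split; auto.
  - intros t; apply adjacent_rot, Hwalk.
  - intros t; rewrite Hper; apply rot_padd.
Qed.

Lemma crossing_path_rot X u Y K : crossing_path X u Y K ->
  crossing_path (fun t => rot (X t)) (rot u) (fun i => rot (Y i)) K.
Proof.
  intros (HY & Havoid & Htop & Hbot); repeat split; intros; rewrite ?height_rot; auto.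
  - apply adjacent_rot, HY; auto.
  - intros E; apply rot_inj in E; revert E; apply Havoid; auto.
Qed.

Lemma rot_fst_pos u : u <> (0, 0) -> exists k, 0 < fst (Nat.iter k rot u).
Proof.
  destruct u as [a b]; intros Hu; apply pair_neqE in Hu; cbn [fst snd] in Hu.
  destruct (Z_lt_le_dec 0 a); [exists 0%nat; auto|].
  destruct (Z_lt_le_dec b 0); [exists 1%nat; simpl; lia|].
  destruct (Z_lt_le_dec a 0); [exists 2%nat; simpl; lia|].
  exists 3%nat; simpl; lia.
Qed.

Theorem periodic_walk_separates X r u Y K :
  periodic_walk X r u -> u <> (0, 0) -> ~ crossing_path X u Y K.
Proof.
  intros HX Hu HY; destruct (rot_fst_pos u Hu) as [k Hk].
  assert (Hrot : forall k,
             periodic_walk (fun t => Nat.iter k rot (X t)) r (Nat.iter k rot u) /\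
             crossing_path (fun t => Nat.iter k rot (X t)) (Nat.iter k rot u)
                           (fun i => Nat.iter k rot (Y i)) K).
  { induction k0 as [|k0 [IHX IHY]]; [split; auto|].
    split; [apply (periodic_walk_rot _ _ _ IHX) | apply (crossing_path_rot _ _ _ _ IHY)]. }
  destruct (Hrot k) as [HXk HYk].
  exact (crossing_path_pos _ _ _ HXk _ _ Hk HYk).
Qed.

Lemma walk_between (X : Z -> Z * Z) : walk X -> forall a b,
  exists (Y : nat -> Z * Z) (K : nat), Y O = X a /\ Y K = X b /\
    (forall i, (i < K)%nat -> adjacent (Y i) (Y (Datatypes.S i))) /\
    (forall i, (i <= K)%nat -> exists t, Y i = X t).
Proof.
  intros Hwalk a b; destruct (Z_le_dec a b).
  - exists (fun i => X (a + Z.of_nat i)), (Z.to_nat (b - a)); repeat split.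
    + f_equal; lia.
    + f_equal; lia.
    + intros i _; replace (a + Z.of_nat (Datatypes.S i)) with (a + Z.of_nat i + 1) by lia.
      apply Hwalk.
    + intros i _; eauto.
  - exists (fun i => X (a - Z.of_nat i)), (Z.to_nat (a - b)); repeat split.
    + f_equal; lia.
    + f_equal; lia.
    + intros i _; apply adjacent_sym.
      replace (a - Z.of_nat i) with (a - Z.of_nat (Datatypes.S i) + 1) by lia; apply Hwalk.
    + intros i _; eauto.
Qed.

(* As [v] is parallel to [u], the translate reaches both the highest and the lowest level of
   the walk, so it must meet the walk. *)
Theorem periodic_walk_meets_parallel_translate X r u v :
  periodic_walk X r u -> u <> (0, 0) -> height u v = 0 ->
  ~ (forall t1 t2, padd (X t1) v <> X t2).
Proof.
  intros HX Hu Hv Hdisj.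
  destruct (periodic_walk_height_max X r u HX) as [ttop Htop].
  destruct (periodic_walk_height_min X r u HX) as [tbot Hbot].
  assert (Hwalk : walk (fun t => padd (X t) v))
    by (intros t; apply adjacent_translate, HX).
  destruct (walk_between _ Hwalk ttop tbot) as (Y & K & Y0 & YK & HY & HYX).
  apply (periodic_walk_separates X r u Y K HX Hu); repeat split; auto.
  - intros i t Hi; destruct (HYX i Hi) as [s ->]; apply Hdisj.
  - intros t; rewrite Y0, height_padd, Hv, Z.add_0_r; apply Htop.
  - intros t; rewrite YK, height_padd, Hv, Z.add_0_r; apply Hbot.
Qed.

(* The bi-infinite periodic walk obtained by repeating the segment [p i, ..., p (i + r)],
   each copy translated by [u] from the previous one. *)
Definition unroll (p : nat -> Z * Z) (i r : nat) (u : Z * Z) (t : Z) : Z * Z :=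
  padd (p (i + Z.to_nat (t mod Z.of_nat r))%nat) (scale (t / Z.of_nat r) u).

Lemma mod_to_nat_lt t r : (0 < r)%nat -> (Z.to_nat (t mod Z.of_nat r) < r)%nat.
Proof. intros Hr; pose proof (Z.mod_pos_bound t (Z.of_nat r) ltac:(lia)); lia. Qed.

Lemma unroll_coincide p i r u v k s x t1 t2 : u = scale k v -> x = scale s v ->
  padd (unroll p i r u t1) x = unroll p i r u t2 ->
  p (i + Z.to_nat (t2 mod Z.of_nat r))%nat =
  padd (p (i + Z.to_nat (t1 mod Z.of_nat r))%nat)
       (scale ((t1 / Z.of_nat r - t2 / Z.of_nat r) * k + s) v).
Proof.
  intros -> ->; unfold unroll; rewrite !pair_eqE; unfold padd, scale; cbn [fst snd]; lia.
Qed.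

Section Unroll.

Variables (w : nat -> dir) (p : nat -> Z * Z) (i r : nat) (u : Z * Z).
Hypotheses (Hr : (0 < r)%nat)
  (Hstep : forall k, (i <= k < i + r)%nat -> p (Datatypes.S k) = padd (p k) (vec (w k)))
  (Hend : p (i + r)%nat = padd (p i) u).

Lemma unroll_succ t :
  unroll p i r u (t + 1) = padd (unroll p i r u t) (vec (w (i + Z.to_nat (t mod Z.of_nat r))%nat)).
Proof.
  unfold unroll; pose proof (Z.mod_pos_bound t (Z.of_nat r) ltac:(lia)).
  destruct (Z_divmod_succ t (Z.of_nat r) ltac:(lia)) as [(Hlt & -> & ->)|(Heq & -> & ->)].
  - replace (i + Z.to_nat (t mod Z.of_nat r + 1))%nat
      with (Datatypes.S (i + Z.to_nat (t mod Z.of_nat r))) by lia.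
    rewrite Hstep by lia; apply pair_eqE; unfold padd, scale; cbn [fst snd]; lia.
  - pose proof (Hstep (i + Z.to_nat (t mod Z.of_nat r)) ltac:(lia)) as Hlast.
    replace (Datatypes.S (i + Z.to_nat (t mod Z.of_nat r))) with (i + r)%nat in Hlast by lia.
    rewrite Hend in Hlast; rewrite Nat.add_0_r; revert Hlast.
    rewrite !pair_eqE; unfold padd, scale; cbn [fst snd]; lia.
Qed.

Lemma unroll_periodic_walk : periodic_walk (unroll p i r u) (Z.of_nat r) u.
Proof.
  repeat split; [lia | |].
  - intros t; rewrite unroll_succ; apply adjacent_padd_vec.
  - intros t; unfold unroll.
    replace (t + Z.of_nat r) with (t + 1 * Z.of_nat r) by lia.
    rewrite Z_mod_plus_full, Z_div_plus_full by lia.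
    apply pair_eqE; unfold padd, scale; cbn [fst snd]; lia.
Qed.

End Unroll.

Section DoubledWalk.

Variables (w : nat -> dir) (p : nat -> Z * Z) (n : nat) (v : Z * Z).
Hypotheses
  (Hstep : forall k, (k < 2 * n)%nat -> p (Datatypes.S k) = padd (p k) (vec (w k)))
  (Hinj : forall i j, (i <= 2 * n)%nat -> (j <= 2 * n)%nat -> p i = p j -> i = j)
  (Hshift : forall k, (k <= n)%nat -> p (k + n)%nat = padd (p k) v).

Lemma shift_nonzero : (0 < n)%nat -> v <> (0, 0).
Proof.
  intros Hn Hv; assert (E : p n = p O).
  { rewrite <- (Nat.add_0_l n), Hshift, Hv by lia.
    apply pair_eqE; unfold padd; cbn [fst snd]; lia. }
  apply Hinj in E; lia.
Qed.

Lemma no_shifted_repeat a b c : (a < b < n)%nat -> p b <> padd (p a) (scale c v).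
Proof.
  remember (b - a)%nat as d eqn:Hd; revert a b c Hd.
  induction d as [d IH] using lt_wf_ind; intros a b c Hd Hab Hrep.
  assert (Hv : v <> (0, 0)) by (apply shift_nonzero; lia).
  destruct (Z_le_gt_dec (Z.abs c) 1) as [Hc|Hc].
  { assert (c = 0 \/ c = 1 \/ c = -1) as [-> | [-> | ->]] by lia.
    - rewrite padd_scale_0 in Hrep; apply Hinj in Hrep; lia.
    - assert (p b = p (a + n)%nat) as E.
      { rewrite Hrep, Hshift by lia; apply pair_eqE; unfold padd, scale; cbn [fst snd]; lia. }
      apply Hinj in E; lia.
    - assert (p a = p (b + n)%nat) as E.
      { rewrite Hshift, Hrep by lia; apply pair_eqE; unfold padd, scale; cbn [fst snd]; lia. }
      apply Hinj in E; lia. }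
  apply (periodic_walk_meets_parallel_translate (unroll p a d (scale c v)) (Z.of_nat d)
           (scale c v) v).
  - apply (unroll_periodic_walk w); [lia | intros; apply Hstep; lia |].
    replace (a + d)%nat with b by lia; exact Hrep.
  - intros E; apply pair_eqE in E; unfold scale in E; cbn [fst snd] in E.
    apply Hv, pair_eqE; cbn [fst snd]; nia.
  - unfold height, scale; cbn [fst snd]; ring.
  - intros t1 t2 E; apply (unroll_coincide _ _ _ _ v c 1) in E;
      [| reflexivity | apply pair_eqE; unfold scale; cbn [fst snd]; lia].
    pose proof (mod_to_nat_lt t1 d ltac:(lia)); pose proof (mod_to_nat_lt t2 d ltac:(lia)).
    revert E; set (e1 := Z.to_nat (t1 mod Z.of_nat d)); set (e2 := Z.to_nat (t2 mod Z.of_nat d)).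
    set (s := (t1 / Z.of_nat d - t2 / Z.of_nat d) * c + 1); intros E.
    destruct (Nat.lt_total e1 e2) as [Hlt|[Heq|Hgt]].
    + exact (IH (e2 - e1)%nat ltac:(lia) (a + e1)%nat (a + e2)%nat s ltac:(lia) ltac:(lia) E).
    + rewrite Heq in E; apply padd_scale_cancel in E; auto.
      assert (Z.abs c = 1); [|lia].
      apply Z.divide_1_r_abs; exists (t2 / Z.of_nat d - t1 / Z.of_nat d); lia.
    + apply padd_scale_flip in E.
      exact (IH (e1 - e2)%nat ltac:(lia) (a + e2)%nat (a + e1)%nat (- s) ltac:(lia) ltac:(lia) E).
Qed.

Lemma shifted_repeat_index_eq a b c :
  (a < n)%nat -> (b < n)%nat -> p b = padd (p a) (scale c v) -> a = b.
Proof.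
  intros Ha Hb Hrep; destruct (Nat.lt_total a b) as [Hab|[Hab|Hab]]; auto; exfalso.
  - exact (no_shifted_repeat a b c ltac:(lia) Hrep).
  - exact (no_shifted_repeat b a (- c) ltac:(lia) (padd_scale_flip _ _ _ _ Hrep)).
Qed.

End DoubledWalk.

Lemma square_walk_shift (m : list dir) (p : nat -> Z * Z) :
  (forall k, (k < length (m ++ m))%nat ->
     p (Datatypes.S k) = padd (p k) (vec (nth k (m ++ m) E))) ->
  forall k, (k <= length m)%nat ->
    p (k + length m)%nat = padd (p k) (psub (p (length m)) (p O)).
Proof.
  rewrite length_app; intros Hstep k; induction k as [|k IH]; intros Hk.
  - rewrite Nat.add_0_l; apply pair_eqE; unfold padd, psub; cbn [fst snd]; lia.
  - rewrite Nat.add_succ_l, !Hstep, IH by lia.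
    rewrite (app_nth1 m m E (n := k)), (app_nth2 m m E (n := k + length m)), Nat.add_sub by lia.
    apply pair_eqE; unfold padd; cbn [fst snd]; lia.
Qed.

Theorem lemma1 (m : list dir) :
  m <> [] -> free_finite (m ++ m) -> free_biinf (biperiodic m).
Proof.
  intros Hm (p & Hstep & Hinj).
  pose proof (square_walk_shift m p Hstep) as Hshift.
  rewrite length_app in Hstep, Hinj.
  set (n := length m) in *; set (v := psub (p n) (p O)) in *.
  assert (Hn : (0 < n)%nat) by (destruct m; [congruence | simpl in *; lia]).
  assert (Hstep1 : forall k, (0 <= k < 0 + n)%nat -> p (Datatypes.S k) = padd (p k) (vec (nth k m E)))
    by (intros k Hk; rewrite Hstep, app_nth1 by lia; reflexivity).
  exists (unroll p 0 n v); split.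
  - exact (unroll_succ (fun k => nth k m E) p 0 n v Hn Hstep1 (Hshift O ltac:(lia))).
  - intros t1 t2 Hcoin.
    assert (Hstep2 : forall k, (k < 2 * n)%nat ->
              p (Datatypes.S k) = padd (p k) (vec (nth k (m ++ m) E)))
      by (intros; apply Hstep; lia).
    assert (Hinj2 : forall i j, (i <= 2 * n)%nat -> (j <= 2 * n)%nat -> p i = p j -> i = j)
      by (intros i j Hi Hj; apply Hinj; lia).
    rewrite <- (padd_scale_0 (unroll p 0 n v t1) v) in Hcoin.
    apply (unroll_coincide _ _ _ _ v 1 0) in Hcoin;
      [| apply pair_eqE; unfold scale; cbn [fst snd]; lia | reflexivity].
    pose proof (mod_to_nat_lt t1 n Hn); pose proof (mod_to_nat_lt t2 n Hn).
    pose proof Hcoin as Hmod.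
    apply (shifted_repeat_index_eq _ _ _ _ Hstep2 Hinj2 Hshift) in Hmod; [| lia | lia].
    rewrite Hmod in Hcoin; apply padd_scale_cancel in Hcoin;
      [| exact (shift_nonzero _ _ _ Hinj2 Hshift Hn)].
    pose proof (Z.div_mod t1 (Z.of_nat n) ltac:(lia));
      pose proof (Z.div_mod t2 (Z.of_nat n) ltac:(lia)).
    pose proof (Z.mod_pos_bound t1 (Z.of_nat n) ltac:(lia));
      pose proof (Z.mod_pos_bound t2 (Z.of_nat n) ltac:(lia)).
    lia.
Qed.
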